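(* For every $\lambda>\lambda^*$, the function $F_\lambda(e)=F(\lambda,e)$ has exactly two roots in $I_\lambda$, both lying in $I_\lambda\cap(-\infty,0)$, and $e(\lambda)$ is the larger of the two, equivalently the root at which $\partial_eF(\lambda,\cdot)>0$.
   Context: Standing setup. Let $\gamma>0$; let $a_1,\dots,a_p>0$ with weights $\omega_i>0$, $\sum_i\omega_i=1$, and $b_1,\dots,b_n>0$ with weights $\pi_j>0$, $\sum_j\pi_j=1$; put $a^*=\max_i a_i$, $b^*=\max_j b_j$. Let $\mu$ be the limiting spectral distribution of $\mathbf{N}\mathbf{N}^T$ where $\mathbf{N}=\mathbf{A}^{1/2}\mathbf{G}\mathbf{B}^{1/2}$ is $k\times l$, $\mathbf{G}$ has iid mean-zero entries of variance $1/l$, $k/l\to\gamma$, and the spectral distributions of $\mathbf{A},\mathbf{B}$ converge to $\nu=\sum_i\omega_i\delta_{a_i}$ and $\underline{\nu}=\sum_j\pi_j\delta_{b_j}$. $\mu$ is a compactly supported probability measure on $[0,\infty)$; $\lambda^*>0$ is the right endpoint of its support, and $s(\lambda)=\int\frac{d\mu(t)}{t-\lambda}$ for $\lambda>\lambda^*$. Define $G(e)=\sum_{j=1}^n\frac{b_j\pi_j}{1+\gamma b_j e}$, $J=\{e: e>-1/(\gamma b^* )\}$, for $\lambda>0$, $I_\lambda=\{e\in J: G(e)<\lambda/a^*\}$, and $F(\lambda,e)=e-\sum_{i=1}^p\frac{a_i\omega_i}{a_iG(e)-\lambda}$. It is known (master equations) that there is a smooth real function $e(\lambda)$ on $(\lambda^*,\infty)$,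 never equal to a pole $-1/(\gamma b_j)$ of $G$ and with $a_iG(e(\lambda))\ne\lambda$, satisfying $s(\lambda)=\sum_{i=1}^p\frac{\omega_i}{a_iG(e(\lambda))-\lambda}$ and $F(\lambda,e(\lambda))=0$. *)

From Stdlib Require Import Reals.
Open Scope R_scope.

Fixpoint sumR (n : nat) (f : nat -> R) : R :=
  match n with
  | O => 0
  | S m => sumR m f + f m
  end.

Definition Gfun (gamma : R) (n : nat) (b pi : nat -> R) (e : R) : R :=
  sumR n (fun j => b j * pi j / (1 + gamma * b j * e)).

Definition Ffun (gamma : R) (p : nat) (a omega : nat -> R) (n : nat)
    (b pi : nat -> R) (lam e : R) : R :=
  e - sumR p (fun i => a i * omega i / (a i * Gfun gamma n b pi e - lam)).

Definition in_J (gamma bstar e : R) : Prop := - / (gamma * bstar) < e.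

Definition in_I (gamma : R) (n : nat) (b pi : nat -> R) (astar bstar lam e : R)
    : Prop :=
  in_J gamma bstar e /\ Gfun gamma n b pi e < lam / astar.

Definition is_max_of (n : nat) (f : nat -> R) (x : R) : Prop :=
  (exists i, (i < n)%nat /\ f i = x) /\ (forall i, (i < n)%nat -> f i <= x).

Definition cont_on (K : R) (f : R -> R) : Prop :=
  forall x, 0 <= x <= K -> continuity_pt f x.

(* mu is (integration against) a Borel probability measure concentrated on
   [0,K], represented (Riesz) as a normalised positive linear functional on
   functions continuous on [0,K], depending only on their values on [0,K]. *)
Record prob_measure_on (mu : (R -> R) -> R) (K : R) : Prop := {
  pm_add : forall f g, cont_on K f -> cont_on K g ->
             mu (fun x => f x + g x) = mu f + mu g;
  pm_scal : forall c f, cont_on K f -> mu (fun x => c * f x) = c * mu f;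
  pm_local : forall f g, cont_on K f -> cont_on K g ->
             (forall x, 0 <= x <= K -> f x = g x) -> mu f = mu g;
  pm_pos : forall f, cont_on K f -> (forall x, 0 <= x <= K -> 0 <= f x) ->
             0 <= mu f;
  pm_one : mu (fun _ => 1) = 1 }.

(* x lies in the (closed) support of mu: every nonnegative test function
   positive at x has positive integral *)
Definition in_support (mu : (R -> R) -> R) (K x : R) : Prop :=
  forall f, cont_on K f -> (forall y, 0 <= y <= K -> 0 <= f y) ->
    0 < f x -> 0 < mu f.

Definition stieltjes (mu : (R -> R) -> R) (lam : R) : R :=
  mu (fun t => / (t - lam)).

Definition smooth_on_ray (c : R) (e : R -> R) : Prop :=
  exists d : nat -> R -> R,
    (forall x, c < x -> d O x = e x) /\
    (forall k x, c < x -> derivable_pt_lim (d k) x (d (S k) x)).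

From Stdlib Require Import Reals Lra Lia.
From Coquelicot Require Import Coquelicot.
Open Scope R_scope.

(* On I_lambda every denominator a_i G(e) - lambda is negative,
   and G is positive and decreasing with G' negative and increasing; hence
   F(e) > e (every root is negative) and dF = dF/de is strictly increasing:
   F(lambda,.) is strictly convex on the half-line I_lambda.  A strictly convex
   function on a half-line has at most two zeros, and if it is positive
   somewhere left of a zero E with f'(E) > 0, it has exactly one other zero,
   which lies left of E and where f' < 0 (section [ConvexZeros]).  Near the left
   end of I_lambda the term of F with a_i = astar blows up, so F is positive
   somewhere left of any root (section [Setup]).  The theorem thus reduces to
   e(lambda) in I_lambda and dF(lambda, e(lambda)) > 0 for lambda > lamstar
   (section [MasterRoot]).  Both hold for lambda large, by the a priori bound
   |G(e) e| = |1 + lambda s(lambda)| <= lamstar / (lambda - lamstar) that the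
   measure mu provides.  They persist along the whole ray by continuity, since
   1 + gamma bstar e(lambda) and lambda - astar G(e(lambda)) never vanish (master
   equations) and neither does dF(lambda, e(lambda)): otherwise e(lambda) would
   minimise F(lambda,.), whereas F strictly decreases in lambda. *)

Lemma sumR_ext n f g :
  (forall i, (i < n)%nat -> f i = g i) -> sumR n f = sumR n g.
Proof.
  induction n as [|n IH]; simpl; intros H; [reflexivity|].
  rewrite IH by (intros; apply H; lia).
  rewrite H by lia; reflexivity.
Qed.

Lemma sumR_plus n f g : sumR n (fun i => f i + g i) = sumR n f + sumR n g.
Proof. induction n as [|n IH]; simpl; [lra | rewrite IH; lra]. Qed.

Lemma sumR_scal n c f : sumR n (fun i => c * f i) = c * sumR n f.
Proof. induction n as [|n IH]; simpl; [lra | rewrite IH; lra]. Qed.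

Lemma sumR_le n f g :
  (forall i, (i < n)%nat -> f i <= g i) -> sumR n f <= sumR n g.
Proof.
  induction n as [|n IH]; simpl; intros H; [lra|].
  assert (f n <= g n) by (apply H; lia).
  assert (sumR n f <= sumR n g) by (apply IH; intros; apply H; lia).
  lra.
Qed.

Lemma sumR_lt n f g : (0 < n)%nat ->
  (forall i, (i < n)%nat -> f i < g i) -> sumR n f < sumR n g.
Proof.
  intros Hn H; destruct n as [|n]; [lia|]; simpl.
  assert (f n < g n) by (apply H; lia).
  assert (sumR n f <= sumR n g) by (apply sumR_le; intros; left; apply H; lia).
  lra.
Qed.

Lemma sumR_zero n : sumR n (fun _ => 0) = 0.
Proof. induction n as [|n IH]; simpl; [lra | rewrite IH; lra]. Qed.

Lemma sumR_pos n f : (0 < n)%nat ->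
  (forall i, (i < n)%nat -> 0 < f i) -> 0 < sumR n f.
Proof. intros; rewrite <- (sumR_zero n); apply sumR_lt; auto. Qed.

Lemma sumR_neg n f : (0 < n)%nat ->
  (forall i, (i < n)%nat -> f i < 0) -> sumR n f < 0.
Proof. intros; rewrite <- (sumR_zero n); apply sumR_lt; auto. Qed.

Lemma sumR_abs n f : Rabs (sumR n f) <= sumR n (fun i => Rabs (f i)).
Proof.
  induction n as [|n IH]; simpl; [rewrite Rabs_R0; lra|].
  eapply Rle_trans; [apply Rabs_triang | lra].
Qed.

Lemma sumR_ge_term n f k : (forall i, (i < n)%nat -> 0 <= f i) ->
  (k < n)%nat -> f k <= sumR n f.
Proof.
  induction n as [|n IH]; simpl; intros H Hk; [lia|].
  assert (Hsum : 0 <= sumR n f)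
    by (rewrite <- (sumR_zero n); apply sumR_le; intros; apply H; lia).
  destruct (Nat.eq_dec k n) as [->|Hkn]; [lra|].
  assert (f k <= sumR n f) by (apply IH; [intros; apply H; lia | lia]).
  assert (0 <= f n) by (apply H; lia). lra.
Qed.

Lemma sumR_le_term n f k : (forall i, (i < n)%nat -> f i <= 0) ->
  (k < n)%nat -> sumR n f <= f k.
Proof.
  intros H Hk.
  assert (Hopp : - f k <= sumR n (fun i => - f i))
    by (apply (sumR_ge_term n (fun i => - f i)); auto; intros i Hi; specialize (H i Hi); lra).
  rewrite (sumR_ext n (fun i => - f i) (fun i => (-1) * f i)), sumR_scal in Hopp
    by (intros; ring).
  lra.
Qed.

Lemma weights_nonempty n w : sumR n w = 1 -> (0 < n)%nat.
Proof. destruct n; simpl; intros; [lra | lia]. Qed.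

(* Pointwise continuity of explicit expressions, stated on lambda-terms so that
   they apply by plain unification. *)
Lemma cont_const c x : continuity_pt (fun _ => c) x.
Proof. apply continuity_pt_const; intros ? ?; reflexivity. Qed.

Lemma cont_plus f g x : continuity_pt f x -> continuity_pt g x ->
  continuity_pt (fun y => f y + g y) x.
Proof. intros; apply (continuity_pt_plus f g); auto. Qed.

Lemma cont_minus f g x : continuity_pt f x -> continuity_pt g x ->
  continuity_pt (fun y => f y - g y) x.
Proof. intros; apply (continuity_pt_minus f g); auto. Qed.

Lemma cont_mult f g x : continuity_pt f x -> continuity_pt g x ->
  continuity_pt (fun y => f y * g y) x.
Proof. intros; apply (continuity_pt_mult f g); auto. Qed.

Lemma cont_div f g x : continuity_pt f x -> continuity_pt g x -> g x <> 0 ->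
  continuity_pt (fun y => f y / g y) x.
Proof. intros; apply (continuity_pt_div f g); auto. Qed.

Lemma cont_pow f k x : continuity_pt f x -> continuity_pt (fun y => f y ^ k) x.
Proof.
  intros Hf; induction k as [|k IH]; simpl; [apply cont_const | apply cont_mult; auto].
Qed.

Lemma cont_comp f g x : continuity_pt f x -> continuity_pt g (f x) ->
  continuity_pt (fun y => g (f y)) x.
Proof. intros; apply (continuity_pt_comp f g); auto. Qed.

Lemma cont_of_deriv f x l : derivable_pt_lim f x l -> continuity_pt f x.
Proof. intros H; apply (derivable_continuous_pt f x (exist _ l H)). Qed.

Lemma sumR_cont n (g : nat -> R -> R) x :
  (forall i, (i < n)%nat -> continuity_pt (g i) x) ->
  continuity_pt (fun y => sumR n (fun i => g i y)) x.
Proof.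
  induction n as [|n IH]; simpl; intros H; [apply cont_const|].
  apply (cont_plus (fun y => sumR n (fun i => g i y)) (g n));
    [apply IH; intros; apply H; lia | apply H; lia].
Qed.

Lemma sumR_derive n (g : nat -> R -> R) (dg : nat -> R) x :
  (forall i, (i < n)%nat -> is_derive (g i) x (dg i)) ->
  is_derive (fun y => sumR n (fun i => g i y)) x (sumR n dg).
Proof.
  induction n as [|n IH]; simpl; intros H.
  - apply is_derive_Reals, derivable_pt_lim_const.
  - apply (is_derive_plus (fun y => sumR n (fun i => g i y)) (g n));
      [apply IH; intros; apply H; lia | apply H; lia].
Qed.

Lemma div_le_den c d m : 0 <= c -> 0 < m -> m <= d -> c / d <= c / m.
Proof.
  intros; unfold Rdiv; apply Rmult_le_compat_l; [assumption|].
  apply Rinv_le_contravar; assumption.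
Qed.

Lemma div_lt_den c d m : 0 < c -> 0 < m -> m < d -> c / d < c / m.
Proof.
  intros; unfold Rdiv; apply Rmult_lt_compat_l; [assumption|].
  apply Rinv_lt_contravar; [nra | assumption].
Qed.

Lemma ratio_neg_lt A u v P Q : 0 < A -> u < v -> v < 0 -> 0 < P -> P < Q ->
  A * u / P < A * v / Q.
Proof.
  intros; apply Rlt_le_trans with (A * v / P).
  - unfold Rdiv; apply Rmult_lt_compat_r; [apply Rinv_0_lt_compat | ]; nra.
  - replace (A * v / P) with (- ((- (A * v)) / P)) by (field; lra).
    replace (A * v / Q) with (- ((- (A * v)) / Q)) by (field; lra).
    apply Ropp_le_contravar, div_le_den; nra.
Qed.

Lemma smooth_on_ray_cont c e : smooth_on_ray c e ->
  forall x, c < x -> continuity_pt e x.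
Proof.
  intros [d [Hd0 Hd]] x Hx.
  apply (continuity_pt_locally_ext (d O) e (x - c)); [lra | | ].
  - intros y Hy; apply Hd0; unfold Rdist in Hy; apply Rabs_def2 in Hy; lra.
  - exact (cont_of_deriv _ _ _ (Hd O x Hx)).
Qed.

Lemma sign_persist (f : R -> R) c x0 :
  (forall x, c < x -> continuity_pt f x) -> (forall x, c < x -> f x <> 0) ->
  c < x0 -> 0 < f x0 -> forall x, c < x -> 0 < f x.
Proof.
  intros Hc Hnz Hx0 Hf0 x Hx.
  destruct (Rlt_le_dec 0 (f x)) as [|Hn]; [assumption | exfalso].
  assert (Hneg : f x < 0) by (destruct Hn as [|Hz]; [assumption | now destruct (Hnz x Hx)]).
  destruct (Rtotal_order x x0) as [Hl|[->|Hg]]; [|lra|].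
  - destruct (Ranalysis5.IVT_interv f x x0) as [z [Hz Hfz]]; auto.
    + intros y Hy; apply Hc; lra.
    + apply (Hnz z); [lra | assumption].
  - destruct (Ranalysis5.IVT_interv (fun y => - f y) x0 x) as [z [Hz Hfz]]; [ | | lra | lra |].
    + intros y Hy; apply (continuity_pt_opp f), Hc; lra.
    + assumption.
    + apply (Hnz z); [lra | lra].
Qed.

Lemma neg_left_of_rising_zero f x l : derivable_pt_lim f x l -> 0 < l ->
  f x = 0 -> forall z, z < x -> exists y, z < y < x /\ f y < 0.
Proof.
  intros Hd Hl Hfx z Hz.
  destruct (Hd (l / 2)) as [del Hdel]; [lra|].
  pose proof (cond_pos del) as Hdel0.
  set (h := - Rmin (del / 2) ((x - z) / 2)).
  assert (Hmin_l : Rmin (del / 2) ((x - z) / 2) <= del / 2) by apply Rmin_l.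
  assert (Hmin_r : Rmin (del / 2) ((x - z) / 2) <= (x - z) / 2) by apply Rmin_r.
  assert (Hmin_pos : 0 < Rmin (del / 2) ((x - z) / 2)) by (apply Rmin_glb_lt; lra).
  assert (Hh : h < 0) by (unfold h; lra).
  assert (Habs : Rabs h < del) by (rewrite Rabs_left by lra; unfold h; lra).
  specialize (Hdel h ltac:(lra) Habs); rewrite Hfx, Rminus_0_r in Hdel.
  apply Rabs_def2 in Hdel.
  assert (Hq : 0 < f (x + h) / h) by lra.
  exists (x + h); split; [unfold h; lra|].
  assert (/ h < 0) by (apply Rinv_lt_0_compat; assumption).
  unfold Rdiv in Hq; nra.
Qed.

(* Zeros of a strictly convex function on a half-line.  The half-line is an
   upward closed set S on which f has a strictly increasing derivative df. *)
Section ConvexZeros.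

Variables (S : R -> Prop) (f df : R -> R).
Hypothesis S_up : forall x y, S x -> x <= y -> S y.
Hypothesis f_deriv : forall x, S x -> derivable_pt_lim f x (df x).
Hypothesis df_incr : forall x y, S x -> x < y -> df x < df y.

Lemma mvt_in x y : S x -> x < y ->
  exists c, x < c < y /\ f y - f x = df c * (y - x).
Proof.
  intros Hx Hxy.
  destruct (MVT_cor2 f df x y Hxy) as [c [Hc1 Hc2]];
    [intros c Hc; apply f_deriv, (S_up x); tauto | eauto].
Qed.

Lemma rolle_in x y : S x -> x < y -> f x = f y -> exists c, x < c < y /\ df c = 0.
Proof.
  intros Hx Hxy Hf; destruct (mvt_in x y Hx Hxy) as [c [Hc Heq]].
  exists c; split; [assumption|].
  apply (Rmult_eq_reg_r (y - x)); [lra | lra].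
Qed.

Lemma critical_point_min c x : S c -> df c = 0 -> S x -> f c <= f x.
Proof.
  intros Hc Hdc Hx; destruct (Rtotal_order x c) as [Hl|[->|Hg]]; [| lra |].
  - destruct (mvt_in x c Hx Hl) as [d [Hd Heq]].
    assert (df d < df c) by (apply df_incr; [apply (S_up x); [assumption | lra] | lra]).
    nra.
  - destruct (mvt_in c x Hc Hg) as [d [Hd Heq]].
    assert (df c < df d) by (apply df_incr; [assumption | lra]).
    nra.
Qed.

Lemma no_three_equal_values x y z : S x -> x < y -> y < z ->
  f x = f y -> f y = f z -> False.
Proof.
  intros Hx Hxy Hyz Hf1 Hf2.
  destruct (rolle_in x y Hx Hxy Hf1) as [c1 [Hc1 Hd1]].
  destruct (rolle_in y z (S_up x y Hx (Rlt_le _ _ Hxy)) Hyz Hf2) as [c2 [Hc2 Hd2]].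
  assert (df c1 < df c2) by (apply df_incr; [apply (S_up x); [assumption | lra] | lra]).
  lra.
Qed.

Lemma exactly_two_zeros z E : S z -> z < E -> 0 < f z -> f E = 0 -> 0 < df E ->
  exists r1, z < r1 < E /\ f r1 = 0 /\ df r1 < 0 /\
    (forall r, S r -> f r = 0 -> r = r1 \/ r = E).
Proof.
  intros Hz HzE Hfz HfE HdE.
  assert (HE : S E) by (apply (S_up z); [assumption | lra]).
  destruct (neg_left_of_rising_zero f E (df E) (f_deriv E HE) HdE HfE z HzE)
    as [y [Hy Hfy]].
  destruct (Ranalysis5.IVT_interv (fun x => - f x) z y) as [r1 [Hr1zy Hfr1]];
    [ | lra | lra | lra | ].
  { intros c Hc; apply (continuity_pt_opp f).
    apply (cont_of_deriv _ _ _ (f_deriv c (S_up z c Hz ltac:(lra)))). }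
  assert (Hr1z : z < r1) by (destruct Hr1zy as [[|<-] _]; [assumption | lra]).
  assert (Hr1 : S r1) by (apply (S_up z); [assumption | lra]).
  assert (Hf1 : f r1 = 0) by lra.
  destruct (rolle_in r1 E Hr1 ltac:(lra) ltac:(lra)) as [c [Hc Hdc]].
  assert (df r1 < df c) by (apply df_incr; [assumption | lra]).
  exists r1; split; [lra|]; split; [assumption|]; split; [lra|].
  intros r Hr Hfr.
  destruct (Rtotal_order r r1) as [Hlt|[|Hgt]]; [exfalso | tauto |].
  - apply (no_three_equal_values r r1 E); auto; lra.
  - destruct (Rtotal_order r E) as [HrE|[|HrE]]; [exfalso | tauto | exfalso].
    + apply (no_three_equal_values r1 r E); auto; lra.
    + apply (no_three_equal_values r1 E r); auto; lra.
Qed.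

End ConvexZeros.

Definition Gderiv (gamma : R) (n : nat) (b pi : nat -> R) (x : R) : R :=
  - sumR n (fun j => gamma * b j * b j * pi j / (1 + gamma * b j * x) ^ 2).

Definition Fderiv (gamma : R) (p : nat) (a omega : nat -> R) (n : nat)
    (b pi : nat -> R) (lam x : R) : R :=
  1 + sumR p (fun i => a i * a i * omega i * Gderiv gamma n b pi x
                       / (a i * Gfun gamma n b pi x - lam) ^ 2).

Lemma G_deriv gamma n b pi x :
  (forall j, (j < n)%nat -> 1 + gamma * b j * x <> 0) ->
  is_derive (Gfun gamma n b pi) x (Gderiv gamma n b pi x).
Proof.
  intros H; unfold Gderiv.
  replace (- sumR n (fun j => gamma * b j * b j * pi j / (1 + gamma * b j * x) ^ 2))
    with (sumR n (fun j => (-1) * (gamma * b j * b j * pi j / (1 + gamma * b j * x) ^ 2)))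
    by (rewrite sumR_scal; ring).
  apply (sumR_derive n (fun j y => b j * pi j / (1 + gamma * b j * y))).
  intros j Hj; specialize (H j Hj).
  auto_derive; [assumption | field; assumption].
Qed.

Lemma F_deriv gamma p a omega n b pi lam x :
  (forall j, (j < n)%nat -> 1 + gamma * b j * x <> 0) ->
  (forall i, (i < p)%nat -> a i * Gfun gamma n b pi x - lam <> 0) ->
  derivable_pt_lim (Ffun gamma p a omega n b pi lam) x
                   (Fderiv gamma p a omega n b pi lam x).
Proof.
  intros Hpole Hden; unfold Ffun, Fderiv.
  set (G := Gfun gamma n b pi); set (dG := Gderiv gamma n b pi x).
  replace (1 + sumR p (fun i => a i * a i * omega i * dG / (a i * G x - lam) ^ 2))
    with (1 - sumR p (fun i => (-1) * (a i * a i * omega i * dG / (a i * G x - lam) ^ 2)))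
    by (rewrite sumR_scal; ring).
  apply (derivable_pt_lim_minus (fun y => y)
           (fun y => sumR p (fun i => a i * omega i / (a i * G y - lam))));
    [apply derivable_pt_lim_id | apply is_derive_Reals].
  apply (sumR_derive p (fun i y => a i * omega i / (a i * G y - lam))).
  intros i Hi; specialize (Hden i Hi).
  assert (Hout : is_derive (fun g => a i * omega i / (a i * g - lam)) (G x)
                   (- (a i * omega i * a i) / (a i * G x - lam) ^ 2))
    by (auto_derive; [assumption | field; assumption]).
  pose proof (is_derive_comp _ _ _ _ _ Hout (G_deriv gamma n b pi x Hpole)) as Hc.
  change (scal ?u ?w) with (u * w) in Hc.
  replace ((-1) * (a i * a i * omega i * dG / (a i * G x - lam) ^ 2))
    with (dG * (- (a i * omega i * a i) / (a i * G x - lam) ^ 2))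
    by (field; assumption).
  exact Hc.
Qed.

Lemma G_cont_along gamma n b pi (u : R -> R) l : continuity_pt u l ->
  (forall j, (j < n)%nat -> 1 + gamma * b j * u l <> 0) ->
  continuity_pt (fun y => Gfun gamma n b pi (u y)) l.
Proof.
  intros Hu Hpole; apply cont_comp; [assumption|].
  apply cont_of_deriv with (Gderiv gamma n b pi (u l)), is_derive_Reals, G_deriv, Hpole.
Qed.

Lemma Gderiv_cont_along gamma n b pi (u : R -> R) l : continuity_pt u l ->
  (forall j, (j < n)%nat -> 1 + gamma * b j * u l <> 0) ->
  continuity_pt (fun y => Gderiv gamma n b pi (u y)) l.
Proof.
  intros Hu Hpole; unfold Gderiv.
  apply (continuity_pt_opp (fun y => sumR n (fun j =>
           gamma * b j * b j * pi j / (1 + gamma * b j * u y) ^ 2))).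
  apply (sumR_cont n (fun j y => gamma * b j * b j * pi j / (1 + gamma * b j * u y) ^ 2)).
  intros j Hj; apply cont_div; [apply cont_const | | apply pow_nonzero, Hpole, Hj].
  apply cont_pow, cont_plus, cont_mult; [apply cont_const | apply cont_const | assumption].
Qed.

Lemma Fderiv_cont_along gamma p a omega n b pi (u : R -> R) l : continuity_pt u l ->
  (forall j, (j < n)%nat -> 1 + gamma * b j * u l <> 0) ->
  (forall i, (i < p)%nat -> a i * Gfun gamma n b pi (u l) - l <> 0) ->
  continuity_pt (fun y => Fderiv gamma p a omega n b pi y (u y)) l.
Proof.
  intros Hu Hpole Hden; unfold Fderiv.
  apply cont_plus; [apply cont_const|].
  apply (sumR_cont p (fun i y => a i * a i * omega i * Gderiv gamma n b pi (u y)
                                   / (a i * Gfun gamma n b pi (u y) - y) ^ 2)).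
  intros i Hi; apply cont_div; [ | | apply pow_nonzero, Hden, Hi].
  - apply cont_mult; [apply cont_const | apply Gderiv_cont_along; assumption].
  - apply cont_pow, cont_minus; [| apply continuity_pt_id].
    apply cont_mult; [apply cont_const | apply G_cont_along; assumption].
Qed.

(* For a probability measure on [0,K] and lambda > K,
   |1 + lambda s(lambda)| = |int t/(t - lambda) dmu(t)| <= K/(lambda - K). *)
Lemma stieltjes_bound mu K lam : 0 < K -> K < lam -> prob_measure_on mu K ->
  Rabs (1 + lam * stieltjes mu lam) <= K / (lam - K).
Proof.
  intros HK Hl [Hadd Hsc _ Hpos Hone].
  set (f := fun t => / (t - lam)); set (g := fun t => 1 + lam * f t).
  set (c := K / (lam - K)).
  assert (Cf : cont_on K f).
  { intros x Hx; apply continuity_pt_inv; [| lra].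
    apply cont_minus; [apply continuity_pt_id | apply cont_const]. }
  assert (C1 : forall d, cont_on K (fun _ => d)) by (intros d x Hx; apply cont_const).
  assert (Clf : cont_on K (fun x => lam * f x))
    by (intros x Hx; apply cont_mult; [apply cont_const | apply Cf; assumption]).
  assert (Cg : cont_on K g)
    by (intros x Hx; apply cont_plus; [apply cont_const | apply Clf; assumption]).
  assert (Hmg : mu g = 1 + lam * stieltjes mu lam)
    by (unfold g; rewrite Hadd, Hone, Hsc by auto; reflexivity).
  assert (Hgb : forall t, 0 <= t <= K -> - c <= g t <= 0).
  { intros t Ht; unfold g, f, c.
    replace (1 + lam * / (t - lam)) with (- (t / (lam - t))) by (field; lra).
    assert (0 <= t / (lam - t)) by (apply Rdiv_le_0_compat; lra).
    assert (t / (lam - t) <= K / (lam - K)).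
    { unfold Rdiv; apply Rmult_le_compat; try lra.
      - left; apply Rinv_0_lt_compat; lra.
      - apply Rinv_le_contravar; lra. }
    lra. }
  assert (Hup : 0 <= mu (fun x => -1 * g x)).
  { apply Hpos; [intros x Hx; apply cont_mult; [apply cont_const | apply Cg; assumption] |].
    intros y Hy; specialize (Hgb y Hy); lra. }
  assert (Hlow : 0 <= mu (fun x => g x + c * 1)).
  { apply Hpos; [intros x Hx; apply cont_plus; [apply Cg; assumption | apply cont_const] |].
    intros y Hy; specialize (Hgb y Hy); lra. }
  rewrite Hsc in Hup by assumption.
  rewrite Hadd, Hsc, Hone in Hlow by auto.
  rewrite <- Hmg; apply Rabs_le; lra.
Qed.

Section Setup.

Variables (gamma : R) (p n : nat) (a omega b pi : nat -> R) (astar bstar : R).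
Hypothesis Hgamma : 0 < gamma.
Hypothesis Ha : forall i, (i < p)%nat -> 0 < a i.
Hypothesis Homega : forall i, (i < p)%nat -> 0 < omega i.
Hypothesis Homega1 : sumR p omega = 1.
Hypothesis Hb : forall j, (j < n)%nat -> 0 < b j.
Hypothesis Hpi : forall j, (j < n)%nat -> 0 < pi j.
Hypothesis Hpi1 : sumR n pi = 1.
Hypothesis Hastar : is_max_of p a astar.
Hypothesis Hbstar : is_max_of n b bstar.

Local Notation G := (Gfun gamma n b pi).
Local Notation dG := (Gderiv gamma n b pi).
Local Notation F := (Ffun gamma p a omega n b pi).
Local Notation dF := (Fderiv gamma p a omega n b pi).
Local Notation inJ := (in_J gamma bstar).
Local Notation inI := (in_I gamma n b pi astar bstar).

Lemma astar_pos : 0 < astar.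
Proof. destruct Hastar as [[k [Hk <-]] _]; auto. Qed.

Lemma bstar_pos : 0 < bstar.
Proof. destruct Hbstar as [[k [Hk <-]] _]; auto. Qed.

Lemma inJ_iff x : inJ x <-> 0 < 1 + gamma * bstar * x.
Proof.
  pose proof bstar_pos.
  assert (Hc : 0 < gamma * bstar) by nra.
  assert (Hinv : gamma * bstar * / (gamma * bstar) = 1) by (field; lra).
  assert (0 < / (gamma * bstar)) by (apply Rinv_0_lt_compat; lra).
  unfold in_J; split; intro Hx; nra.
Qed.

Lemma J_den_pos x : inJ x -> forall j, (j < n)%nat -> 0 < 1 + gamma * b j * x.
Proof.
  intros Hx j Hj; apply inJ_iff in Hx.
  pose proof (Hb j Hj); pose proof (proj2 Hbstar j Hj).
  destruct (Rle_dec 0 x); nra.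
Qed.

Lemma J_pole_free x : inJ x -> forall j, (j < n)%nat -> 1 + gamma * b j * x <> 0.
Proof. intros Hx j Hj; pose proof (J_den_pos x Hx j Hj); lra. Qed.

Lemma G_pos x : inJ x -> 0 < G x.
Proof.
  intros Hx; apply sumR_pos; [apply (weights_nonempty n pi Hpi1) |].
  intros j Hj; pose proof (J_den_pos x Hx j Hj); pose proof (Hb j Hj); pose proof (Hpi j Hj).
  apply Rdiv_lt_0_compat; nra.
Qed.

Lemma G_decr x y : inJ x -> x < y -> G y < G x.
Proof.
  intros Hx Hxy; apply sumR_lt; [apply (weights_nonempty n pi Hpi1) |].
  intros j Hj; pose proof (J_den_pos x Hx j Hj); pose proof (Hb j Hj); pose proof (Hpi j Hj).
  assert (0 < gamma * b j) by nra.
  apply div_lt_den; nra.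
Qed.

Lemma dG_neg x : inJ x -> dG x < 0.
Proof.
  intros Hx; unfold Gderiv; apply Ropp_lt_gt_0_contravar, sumR_pos;
    [apply (weights_nonempty n pi Hpi1) |].
  intros j Hj; pose proof (J_den_pos x Hx j Hj).
  apply Rdiv_lt_0_compat; [| apply pow_lt; assumption].
  repeat apply Rmult_lt_0_compat; auto.
Qed.

Lemma dG_incr x y : inJ x -> x < y -> dG x < dG y.
Proof.
  intros Hx Hxy; unfold Gderiv; apply Ropp_lt_contravar, sumR_lt;
    [apply (weights_nonempty n pi Hpi1) |].
  intros j Hj; pose proof (J_den_pos x Hx j Hj); pose proof (Hb j Hj); pose proof (Hpi j Hj).
  assert (0 < gamma * b j) by nra.
  assert (1 + gamma * b j * x < 1 + gamma * b j * y) by nra.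
  apply div_lt_den; [repeat apply Rmult_lt_0_compat; auto | apply pow_lt; assumption | simpl; nra].
Qed.

Lemma inI_iff lam x : inI lam x <-> inJ x /\ astar * G x < lam.
Proof.
  pose proof astar_pos; unfold in_I; split; intros [Hx HG]; split; auto.
  - replace lam with (astar * (lam / astar)) by (field; lra).
    apply Rmult_lt_compat_l; assumption.
  - apply (Rmult_lt_reg_l astar); [assumption|].
    replace (astar * (lam / astar)) with lam by (field; lra); assumption.
Qed.

Lemma inI_den lam x : inI lam x -> forall i, (i < p)%nat -> a i * G x - lam < 0.
Proof.
  intros Hx i Hi; apply inI_iff in Hx as [Hx HG].
  pose proof (G_pos x Hx); pose proof (proj2 Hastar i Hi); nra.
Qed.

Lemma inI_up lam x y : inI lam x -> x <= y -> inI lam y.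
Proof.
  intros Hx Hxy; apply inI_iff in Hx as [Hx HG]; apply inI_iff.
  assert (HJ : inJ y) by (unfold in_J in *; lra).
  split; [assumption|].
  destruct Hxy as [Hlt | <-]; [| assumption].
  pose proof (G_decr x y Hx Hlt); pose proof astar_pos; nra.
Qed.

Lemma F_deriv_I lam x : inI lam x -> derivable_pt_lim (F lam) x (dF lam x).
Proof.
  intros Hx; apply F_deriv; [apply J_pole_free, Hx |].
  intros i Hi; pose proof (inI_den lam x Hx i Hi); lra.
Qed.

Lemma F_gt_id lam x : inI lam x -> x < F lam x.
Proof.
  intros Hx; unfold Ffun.
  enough (sumR p (fun i => a i * omega i / (a i * G x - lam)) < 0) by lra.
  apply sumR_neg; [apply (weights_nonempty p omega Homega1) |].
  intros i Hi; pose proof (inI_den lam x Hx i Hi); pose proof (Ha i Hi); pose proof (Homega i Hi).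
  unfold Rdiv; apply Rmult_pos_neg; [nra | apply Rinv_lt_0_compat; assumption].
Qed.

Lemma dF_incr lam x y : inI lam x -> x < y -> dF lam x < dF lam y.
Proof.
  intros Hx Hxy.
  assert (Hy : inI lam y) by (apply (inI_up lam x); [assumption | lra]).
  pose proof (dG_incr x y (proj1 Hx) Hxy); pose proof (dG_neg y (proj1 Hy)).
  pose proof (G_decr x y (proj1 Hx) Hxy).
  unfold Fderiv; apply Rplus_lt_compat_l, sumR_lt;
    [apply (weights_nonempty p omega Homega1) |].
  intros i Hi; pose proof (inI_den lam x Hx i Hi); pose proof (inI_den lam y Hy i Hi).
  pose proof (Ha i Hi); pose proof (Homega i Hi).
  assert (a i * G y < a i * G x) by (apply Rmult_lt_compat_l; assumption).
  apply ratio_neg_lt;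
    [repeat apply Rmult_lt_0_compat; auto | assumption | assumption | simpl; nra | simpl; nra].
Qed.

Lemma F_decr_in_lam lam lam' x : inI lam' x -> lam' < lam ->
  inI lam x /\ F lam x < F lam' x.
Proof.
  intros Hx Hl; pose proof (inI_den lam' x Hx) as Hden.
  apply inI_iff in Hx as [Hx HG]; split; [apply inI_iff; split; [assumption | lra] |].
  unfold Ffun; apply Rplus_lt_compat_l, Ropp_lt_contravar, sumR_lt;
    [apply (weights_nonempty p omega Homega1) |].
  intros i Hi; specialize (Hden i Hi); pose proof (Ha i Hi); pose proof (Homega i Hi).
  replace (a i * omega i / (a i * G x - lam'))
    with (- (a i * omega i / (lam' - a i * G x))) by (field; lra).
  replace (a i * omega i / (a i * G x - lam))
    with (- (a i * omega i / (lam - a i * G x))) by (field; lra).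
  apply Ropp_lt_contravar, div_lt_den; nra.
Qed.

Lemma G_cont x : inJ x -> continuity_pt G x.
Proof.
  intros Hx; apply cont_of_deriv with (dG x), is_derive_Reals, G_deriv, J_pole_free, Hx.
Qed.

(* At a root E in I_lambda the distance from lambda to astar G(E) is bounded
   below, because E lies right of the pole -1/(gamma bstar). *)
Lemma root_gap lam E k : (k < p)%nat -> a k = astar -> inI lam E -> F lam E = 0 ->
  astar * omega k * (gamma * bstar) < lam - astar * G E.
Proof.
  intros Hk Hak HE HF; pose proof (inI_den lam E HE) as Hden.
  assert (Hterm : sumR p (fun i => a i * omega i / (a i * G E - lam))
                  <= a k * omega k / (a k * G E - lam)).
  { apply (sumR_le_term p (fun i => a i * omega i / (a i * G E - lam))); [| assumption].
    intros i Hi; specialize (Hden i Hi); pose proof (Ha i Hi); pose proof (Homega i Hi).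
    unfold Rdiv; apply Rmult_le_0_l; [nra | left; apply Rinv_lt_0_compat; assumption]. }
  specialize (Hden k Hk); rewrite Hak in Hterm, Hden.
  pose proof astar_pos; pose proof (Homega k Hk); pose proof bstar_pos.
  apply inI_iff in HE as [HJ _]; apply inJ_iff in HJ.
  set (c := astar * omega k) in *; set (D := lam - astar * G E) in *.
  assert (HD : 0 < D) by (unfold D; lra).
  unfold Ffun in HF; fold D in HF.
  assert (HED : E * D <= - c).
  { replace (c / (astar * G E - lam)) with (- c / D) in Hterm by (unfold D; field; lra).
    assert (E <= - c / D) by lra.
    replace (- c) with (- c / D * D) by (field; lra).
    apply Rmult_le_compat_r; lra. }
  assert (0 < (1 + gamma * bstar * E) * D) by (apply Rmult_lt_0_compat; lra).
  assert (gamma * bstar * (E * D) <= gamma * bstar * (- c))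
    by (apply Rmult_le_compat_l; nra).
  nra.
Qed.

(* Where astar G comes close to lambda, the term of F with a_k = astar
   dominates and F is positive. *)
Lemma F_pos_near_left_end lam z k : (k < p)%nat -> a k = astar -> inI lam z ->
  lam - astar * G z <= astar * omega k * (gamma * bstar) / 2 -> 0 < F lam z.
Proof.
  intros Hk Hak Hz Hclose; pose proof (inI_den lam z Hz) as Hden.
  assert (Hterm : sumR p (fun i => a i * omega i / (a i * G z - lam))
                  <= a k * omega k / (a k * G z - lam)).
  { apply (sumR_le_term p (fun i => a i * omega i / (a i * G z - lam))); [| assumption].
    intros i Hi; specialize (Hden i Hi); pose proof (Ha i Hi); pose proof (Homega i Hi).
    unfold Rdiv; apply Rmult_le_0_l; [nra | left; apply Rinv_lt_0_compat; assumption]. }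
  specialize (Hden k Hk); rewrite Hak in Hterm, Hden.
  pose proof astar_pos; pose proof (Homega k Hk); pose proof bstar_pos.
  apply inI_iff in Hz as [HJ _]; apply inJ_iff in HJ.
  set (c := astar * omega k) in *; set (D := lam - astar * G z) in *.
  assert (HD : 0 < D) by (unfold D; lra).
  assert (Hc : 0 < c) by (unfold c; nra).
  replace (c / (astar * G z - lam)) with (- (c / D)) in Hterm by (unfold D; field; lra).
  assert (Hq : c / D * D = c) by (field; lra).
  assert (Hq0 : 0 < c / D) by (apply Rdiv_lt_0_compat; lra).
  assert (Hgb : 0 < gamma * bstar) by nra.
  assert (c <= c / D * (c * (gamma * bstar) / 2))
    by (rewrite <- Hq at 1; apply Rmult_le_compat_l; lra).
  assert (2 <= c / D * (gamma * bstar)) by nra.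
  unfold Ffun; fold D; nra.
Qed.

Lemma G_unbounded_left M E : 0 < M -> inJ E -> exists x, x < E /\ inJ x /\ M <= G x.
Proof.
  intros HM HE; apply inJ_iff in HE.
  destruct Hbstar as [[k [Hk Hbk]] _].
  pose proof bstar_pos; pose proof (Hpi k Hk).
  assert (Hc : 0 < gamma * bstar) by nra.
  set (t := Rmin (bstar * pi k / M) ((1 + gamma * bstar * E) / 2)).
  assert (Ht : 0 < t) by (apply Rmin_glb_lt; [apply Rdiv_lt_0_compat; nra | lra]).
  assert (HtM : t * M <= bstar * pi k).
  { replace (bstar * pi k) with (bstar * pi k / M * M) by (field; lra).
    apply Rmult_le_compat_r; [lra | apply Rmin_l]. }
  assert (HtE : t < 1 + gamma * bstar * E) by (eapply Rle_lt_trans; [apply Rmin_r | lra]).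
  set (x := (t - 1) / (gamma * bstar)).
  assert (Hxt : 1 + gamma * bstar * x = t) by (unfold x; field; lra).
  assert (HJ : inJ x) by (apply inJ_iff; lra).
  exists x; split; [nra | split; [assumption |]].
  apply Rle_trans with (bstar * pi k / t).
  - apply (Rmult_le_reg_r t); [assumption|].
    replace (bstar * pi k / t * t) with (bstar * pi k) by (field; lra); lra.
  - rewrite <- Hxt, <- Hbk; apply (sumR_ge_term n (fun j => b j * pi j / (1 + gamma * b j * x)));
      [| assumption].
    intros j Hj; pose proof (J_den_pos x HJ j Hj); pose proof (Hb j Hj); pose proof (Hpi j Hj).
    left; apply Rdiv_lt_0_compat; nra.
Qed.

Lemma F_pos_left_of_root lam E : inI lam E -> F lam E = 0 ->
  exists z, z < E /\ inI lam z /\ 0 < F lam z.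
Proof.
  intros HE HF; destruct Hastar as [[k [Hk Hak]] _].
  pose proof astar_pos; pose proof bstar_pos; pose proof (Homega k Hk).
  set (delta := astar * omega k * (gamma * bstar)).
  assert (Hdelta : 0 < delta) by (unfold delta; repeat apply Rmult_lt_0_compat; auto).
  pose proof (root_gap lam E k Hk Hak HE HF) as Hgap; fold delta in Hgap.
  pose proof HE as [HJE _]; pose proof (G_pos E HJE).
  assert (Hlam : 0 < lam) by nra.
  destruct (G_unbounded_left (lam / astar) E) as [x1 [Hx1E [Hx1J Hx1G]]];
    [apply Rdiv_lt_0_compat; assumption | assumption |].
  set (h := fun x => lam - delta / 2 - astar * G x).
  assert (Hh1 : h x1 < 0).
  { unfold h; apply (Rmult_le_compat_l astar) in Hx1G; [| lra].
    replace (astar * (lam / astar)) with lam in Hx1G by (field; lra); lra. }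
  destruct (Ranalysis5.IVT_interv h x1 E) as [z [Hz Hhz]]; [ | assumption | lra | unfold h; lra |].
  { intros c Hc; apply cont_minus; [apply cont_const|].
    apply cont_mult; [apply cont_const | apply G_cont; unfold in_J in *; lra]. }
  assert (HzE : z < E) by (destruct Hz as [_ [Hlt | Heq]]; [assumption | subst z; unfold h in Hhz; lra]).
  assert (Hzi : inI lam z).
  { apply inI_iff; split; [unfold in_J in *; lra | unfold h in Hhz; lra]. }
  exists z; split; [assumption | split; [assumption |]].
  apply (F_pos_near_left_end lam z k Hk Hak Hzi); unfold h in Hhz; fold delta; lra.
Qed.

Lemma two_roots lam E : inI lam E -> F lam E = 0 -> 0 < dF lam E ->
  exists r1, r1 < E /\ E < 0 /\ inI lam r1 /\ F lam r1 = 0 /\ dF lam r1 < 0 /\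
    (forall r, inI lam r -> F lam r = 0 -> r = r1 \/ r = E).
Proof.
  intros HE HF HdF.
  pose proof (F_gt_id lam E HE) as HE0.
  destruct (F_pos_left_of_root lam E HE HF) as [z [HzE [Hz HFz]]].
  destruct (exactly_two_zeros (inI lam) (F lam) (dF lam) (inI_up lam) (F_deriv_I lam)
              (dF_incr lam) z E Hz HzE HFz HF HdF) as [r1 [Hr1 [HF1 [Hd1 Huniq]]]].
  exists r1; split; [lra|]; split; [lra|].
  split; [apply (inI_up lam z); [assumption | lra] | auto].
Qed.

(* At a root, G(E) E = 1 + lambda s where s is the right-hand side of the
   master equation for the Stieltjes transform. *)
Lemma GE_identity lam E : (forall i, (i < p)%nat -> a i * G E <> lam) -> F lam E = 0 ->
  G E * E = 1 + lam * sumR p (fun i => omega i / (a i * G E - lam)).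
Proof.
  intros Hden HF; unfold Ffun in HF; set (g := G E) in *.
  assert (HE : E = sumR p (fun i => a i * omega i / (a i * g - lam))) by lra.
  rewrite HE, <- !sumR_scal, <- Homega1 at 1; rewrite <- sumR_plus.
  apply sumR_ext; intros i Hi; specialize (Hden i Hi); field; lra.
Qed.

Lemma root_bound lam E : 0 < lam -> (forall i, (i < p)%nat -> a i * G E <> lam) ->
  F lam E = 0 -> Rabs (G E * E) <= 1 -> lam * Rabs E <= 2 * astar.
Proof.
  intros Hlam Hden HF HGE; pose proof astar_pos.
  set (g := G E) in *; unfold Ffun in HF; fold g in HF.
  destruct (Rle_lt_dec (2 * astar * Rabs g) lam) as [Hsmall | Hbig].
  - assert (Hterm : forall i, (i < p)%nat ->
              lam * Rabs (a i * omega i / (a i * g - lam)) <= 2 * astar * omega i).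
    { intros i Hi; pose proof (Ha i Hi); pose proof (Homega i Hi); pose proof (proj2 Hastar i Hi).
      pose proof (Rle_abs g).
      assert (Hd : a i * g - lam <= - (lam / 2)).
      { assert (a i * g <= a i * Rabs g) by (apply Rmult_le_compat_l; lra).
        assert (a i * Rabs g <= astar * Rabs g)
          by (apply Rmult_le_compat_r; [apply Rabs_pos | assumption]).
        lra. }
      set (d := a i * g - lam) in *; set (q := a i * omega i / - d).
      replace (a i * omega i / d) with (- q) by (unfold q; field; lra).
      assert (Hq : q * - d = a i * omega i) by (unfold q; field; lra).
      assert (0 <= q) by (unfold q; apply Rdiv_le_0_compat; nra).
      rewrite Rabs_Ropp, Rabs_pos_eq by assumption; nra. }
    replace (Rabs E) with (Rabs (sumR p (fun i => a i * omega i / (a i * g - lam))))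
      by (f_equal; lra).
    apply Rle_trans with (lam * sumR p (fun i => Rabs (a i * omega i / (a i * g - lam)))).
    + apply Rmult_le_compat_l; [lra | apply sumR_abs].
    + rewrite <- sumR_scal.
      replace (2 * astar) with (sumR p (fun i => 2 * astar * omega i))
        by (rewrite sumR_scal, Homega1; ring).
      apply sumR_le; assumption.
  - rewrite Rabs_mult in HGE; pose proof (Rabs_pos E); pose proof (Rabs_pos g); nra.
Qed.

Lemma small_root_den E : 2 * gamma * bstar * Rabs E <= 1 ->
  forall j, (j < n)%nat -> 1 / 2 <= 1 + gamma * b j * E.
Proof.
  intros HE j Hj; pose proof (Hb j Hj); pose proof (proj2 Hbstar j Hj).
  pose proof (Rle_abs (- E)) as HabsE; rewrite Rabs_Ropp in HabsE.
  assert (gamma * b j * Rabs E <= gamma * bstar * Rabs E)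
    by (apply Rmult_le_compat_r; [apply Rabs_pos | nra]).
  assert (0 < gamma * b j) by nra.
  nra.
Qed.

Lemma small_root_G_bounds E : 2 * gamma * bstar * Rabs E <= 1 ->
  G E <= 2 * bstar /\ - dG E <= 4 * gamma * bstar * bstar.
Proof.
  intros HE; pose proof (small_root_den E HE) as Hden; split.
  - replace (2 * bstar) with (sumR n (fun j => 2 * bstar * pi j))
      by (rewrite sumR_scal, Hpi1; ring).
    apply sumR_le; intros j Hj.
    pose proof (Hden j Hj); pose proof (Hb j Hj); pose proof (Hpi j Hj); pose proof (proj2 Hbstar j Hj).
    apply Rle_trans with (b j * pi j / (1 / 2)); [apply div_le_den; nra |].
    replace (b j * pi j / (1 / 2)) with (2 * (b j * pi j)) by field; nra.
  - unfold Gderiv; rewrite Ropp_involutive.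
    replace (4 * gamma * bstar * bstar) with (sumR n (fun j => 4 * gamma * bstar * bstar * pi j))
      by (rewrite sumR_scal, Hpi1; ring).
    apply sumR_le; intros j Hj.
    pose proof (Hden j Hj); pose proof (Hb j Hj); pose proof (Hpi j Hj); pose proof (proj2 Hbstar j Hj).
    assert (Hc : 0 <= gamma * b j * b j * pi j) by (repeat apply Rmult_le_pos; lra).
    apply Rle_trans with (gamma * b j * b j * pi j / (1 / 4)); [apply div_le_den; simpl; nra |].
    replace (gamma * b j * b j * pi j / (1 / 4)) with (4 * gamma * (b j * b j) * pi j) by field.
    assert (b j * b j <= bstar * bstar) by nra.
    apply Rmult_le_compat_r; [lra | nra].
Qed.

Lemma dF_lower_bound lam E M : inJ E -> 0 < M ->
  (forall i, (i < p)%nat -> M <= lam - a i * G E) ->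
  1 - astar * astar * (- dG E) / (M * M) <= dF lam E.
Proof.
  intros HE HM Hsep; pose proof (dG_neg E HE); pose proof astar_pos.
  set (q := - dG E) in *; set (c := astar * astar * q / (M * M)).
  assert (Hq : 0 <= q) by (unfold q; lra).
  unfold Fderiv; enough (- c <= sumR p (fun i => a i * a i * omega i * dG E
                                                / (a i * G E - lam) ^ 2)) by lra.
  replace (- c) with (sumR p (fun i => - c * omega i)) by (rewrite sumR_scal, Homega1; ring).
  apply sumR_le; intros i Hi.
  pose proof (Ha i Hi); pose proof (Homega i Hi); pose proof (proj2 Hastar i Hi); specialize (Hsep i Hi).
  set (D := lam - a i * G E) in *.
  replace (a i * G E - lam) with (- D) by (unfold D; ring).
  replace (a i * a i * omega i * dG E / (- D) ^ 2)
    with (- (omega i * (a i * a i * q / (D * D)))) by (unfold q; field; lra).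
  enough (a i * a i * q / (D * D) <= c) by nra.
  apply Rle_trans with (astar * astar * q / (D * D)).
  - assert (a i * a i <= astar * astar) by nra.
    unfold Rdiv; apply Rmult_le_compat_r; [left; apply Rinv_0_lt_compat; nra |].
    apply Rmult_le_compat_r; assumption.
  - apply div_le_den; [nra | nra | nra].
Qed.

Lemma large_lambda_root lam E : 4 * astar * bstar * (gamma + 1) <= lam ->
  lam * Rabs E <= 2 * astar -> inI lam E /\ 0 < dF lam E.
Proof.
  intros Hlam HE; pose proof astar_pos; pose proof bstar_pos.
  assert (Hab : 0 < astar * bstar) by nra.
  assert (Hl0 : 0 < lam) by nra.
  assert (Hsmall : 2 * gamma * bstar * Rabs E <= 1).
  { apply (Rmult_le_reg_l lam); [lra|]; pose proof (Rabs_pos E).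
    assert (2 * gamma * bstar * (lam * Rabs E) <= 2 * gamma * bstar * (2 * astar))
      by (apply Rmult_le_compat_l; nra).
    nra. }
  destruct (small_root_G_bounds E Hsmall) as [HG HdG].
  assert (HJ : inJ E).
  { destruct Hbstar as [[k [Hk Hbk]] _]; apply inJ_iff; rewrite <- Hbk.
    pose proof (small_root_den E Hsmall k Hk); lra. }
  pose proof (G_pos E HJ).
  set (M := 2 * astar * bstar * (gamma + 1)).
  assert (HM : 0 < M) by (unfold M; nra).
  assert (HaG : astar * G E <= 2 * astar * bstar) by nra.
  split; [apply inI_iff; split; [assumption | unfold M in *; nra] |].
  eapply Rlt_le_trans; [| apply (dF_lower_bound lam E M HJ HM)].
  - assert (astar * astar * (- dG E) <= astar * astar * (4 * gamma * bstar * bstar))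
      by (apply Rmult_le_compat_l; nra).
    assert (Hratio : astar * astar * (- dG E) / (M * M) <= gamma / ((gamma + 1) * (gamma + 1))).
    { apply (Rmult_le_reg_r (M * M)); [nra|].
      replace (astar * astar * (- dG E) / (M * M) * (M * M)) with (astar * astar * (- dG E))
        by (field; lra).
      replace (gamma / ((gamma + 1) * (gamma + 1)) * (M * M))
        with (astar * astar * (4 * gamma * bstar * bstar)) by (unfold M; field; lra).
      assumption. }
    assert (gamma / ((gamma + 1) * (gamma + 1)) < 1).
    { apply (Rmult_lt_reg_r ((gamma + 1) * (gamma + 1))); [nra|].
      replace (gamma / ((gamma + 1) * (gamma + 1)) * ((gamma + 1) * (gamma + 1))) with gamma
        by (field; lra).
      nra. }
    lra.
  - intros i Hi; pose proof (proj2 Hastar i Hi); pose proof (Ha i Hi).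
    assert (a i * G E <= astar * G E) by nra.
    unfold M in *; nra.
Qed.

Section MasterRoot.

Variables (mu : (R -> R) -> R) (lamstar : R) (e : R -> R).
Hypothesis Hlamstar : 0 < lamstar.
Hypothesis Hmu : prob_measure_on mu lamstar.
Hypothesis He_cont : forall lam, lamstar < lam -> continuity_pt e lam.
Hypothesis He_pole : forall lam, lamstar < lam ->
  forall j, (j < n)%nat -> 1 + gamma * b j * e lam <> 0.
Hypothesis He_den : forall lam, lamstar < lam ->
  forall i, (i < p)%nat -> a i * G (e lam) <> lam.
Hypothesis He_s : forall lam, lamstar < lam ->
  stieltjes mu lam = sumR p (fun i => omega i / (a i * G (e lam) - lam)).
Hypothesis He_F : forall lam, lamstar < lam -> F lam (e lam) = 0.

(* For lambda large the master root is small, hence in I_lambda with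
   positive slope. *)
Lemma master_root_large :
  exists lam0, lamstar < lam0 /\ inI lam0 (e lam0) /\ 0 < dF lam0 (e lam0).
Proof.
  pose proof astar_pos; pose proof bstar_pos.
  set (lam0 := 2 * lamstar + 4 * astar * bstar * (gamma + 1)).
  assert (0 < 4 * astar * bstar * (gamma + 1))
    by (repeat apply Rmult_lt_0_compat; lra).
  assert (Hl0 : lamstar < lam0) by (unfold lam0; lra).
  exists lam0; split; [assumption|].
  apply large_lambda_root; [unfold lam0; lra|].
  apply root_bound; [lra | apply He_den, Hl0 | apply He_F, Hl0 |].
  rewrite (GE_identity lam0 (e lam0) (He_den lam0 Hl0) (He_F lam0 Hl0)), <- (He_s lam0 Hl0).
  apply Rle_trans with (lamstar / (lam0 - lamstar));
    [apply stieltjes_bound; assumption |].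
  apply (Rmult_le_reg_r (lam0 - lamstar)); [lra|].
  replace (lamstar / (lam0 - lamstar) * (lam0 - lamstar)) with lamstar by (field; lra).
  unfold lam0; lra.
Qed.

(* The master root never leaves I_lambda: leaving it would make
   1 + gamma bstar e(lambda) or lambda - astar G(e(lambda)) vanish. *)
Lemma master_root_in_I lam : lamstar < lam -> inI lam (e lam).
Proof.
  destruct master_root_large as [lam0 [Hl0 [HI0 _]]].
  destruct Hastar as [[ka [Hka Hak]] _]; destruct Hbstar as [[kb [Hkb Hbk]] _].
  assert (HP : forall l, lamstar < l -> 0 < 1 + gamma * bstar * e l).
  { apply (sign_persist _ lamstar lam0); [ | | assumption | apply inJ_iff, (proj1 HI0)].
    - intros l Hl; apply cont_plus; [apply cont_const|].
      apply cont_mult; [apply cont_const | apply He_cont, Hl].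
    - intros l Hl; rewrite <- Hbk; apply He_pole; assumption. }
  assert (HQ : forall l, lamstar < l -> 0 < l - astar * G (e l)).
  { apply (sign_persist _ lamstar lam0); [ | | assumption | apply inI_iff in HI0; lra].
    - intros l Hl; apply cont_minus; [apply continuity_pt_id|].
      apply cont_mult; [apply cont_const|].
      apply G_cont_along; [apply He_cont, Hl | apply He_pole, Hl].
    - intros l Hl; rewrite <- Hak; specialize (He_den l Hl ka Hka); lra. }
  intros Hlam; apply inI_iff; split; [apply inJ_iff, HP, Hlam | specialize (HQ lam Hlam); lra].
Qed.

(* The master root is never a critical point of F(lambda,.): it would be the
   minimum of F(lambda,.), but F(lambda, e(lambda')) < F(lambda', e(lambda')) = 0
   for lamstar < lambda' < lambda. *)
Lemma master_root_not_critical lam : lamstar < lam -> dF lam (e lam) <> 0.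
Proof.
  intros Hlam Hcrit; set (lam' := (lamstar + lam) / 2).
  assert (Hl' : lamstar < lam') by (unfold lam'; lra).
  destruct (F_decr_in_lam lam lam' (e lam') (master_root_in_I lam' Hl')) as [HI' Hlt];
    [unfold lam'; lra |].
  pose proof (critical_point_min (inI lam) (F lam) (dF lam) (inI_up lam) (F_deriv_I lam)
                (dF_incr lam) (e lam) (e lam') (master_root_in_I lam Hlam) Hcrit HI').
  rewrite He_F in * by assumption; lra.
Qed.

Lemma master_root_rising lam : lamstar < lam -> 0 < dF lam (e lam).
Proof.
  destruct master_root_large as [lam0 [Hl0 [_ Hd0]]].
  revert lam; apply (sign_persist _ lamstar lam0);
    [ | exact master_root_not_critical | assumption | assumption].
  intros l Hl; apply Fderiv_cont_along; [apply He_cont, Hl | apply He_pole, Hl |].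
  intros i Hi; specialize (He_den l Hl i Hi); lra.
Qed.

End MasterRoot.

End Setup.

Theorem mainTheorem15
  (gamma : R) (p n : nat) (a omega b pi : nat -> R) (astar bstar : R)
  (mu : (R -> R) -> R) (lamstar : R) (e : R -> R)
  (* standing setup *)
  (Hgamma : 0 < gamma)
  (Ha : forall i, (i < p)%nat -> 0 < a i)
  (Homega : forall i, (i < p)%nat -> 0 < omega i)
  (Homega1 : sumR p omega = 1)
  (Hb : forall j, (j < n)%nat -> 0 < b j)
  (Hpi : forall j, (j < n)%nat -> 0 < pi j)
  (Hpi1 : sumR n pi = 1)
  (Hastar : is_max_of p a astar)
  (Hbstar : is_max_of n b bstar)
  (* mu : compactly supported probability measure on [0,oo) whose support
     has right endpoint lamstar > 0 *)
  (Hlamstar : 0 < lamstar)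
  (Hmu : prob_measure_on mu lamstar)
  (Hsupp : in_support mu lamstar lamstar)
  (* master equations *)
  (He_smooth : smooth_on_ray lamstar e)
  (He_pole : forall lam, lamstar < lam ->
     forall j, (j < n)%nat -> 1 + gamma * b j * e lam <> 0)
  (He_den : forall lam, lamstar < lam ->
     forall i, (i < p)%nat -> a i * Gfun gamma n b pi (e lam) <> lam)
  (He_s : forall lam, lamstar < lam ->
     stieltjes mu lam =
       sumR p (fun i => omega i / (a i * Gfun gamma n b pi (e lam) - lam)))
  (He_F : forall lam, lamstar < lam ->
     Ffun gamma p a omega n b pi lam (e lam) = 0) :
  forall lam, lamstar < lam ->
    exists r1 r2 d1 d2 : R,
      r1 < r2 /\ r2 < 0 /\
      in_I gamma n b pi astar bstar lam r1 /\
      in_I gamma n b pi astar bstar lam r2 /\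
      Ffun gamma p a omega n b pi lam r1 = 0 /\
      Ffun gamma p a omega n b pi lam r2 = 0 /\
      (forall r, in_I gamma n b pi astar bstar lam r ->
         Ffun gamma p a omega n b pi lam r = 0 -> r = r1 \/ r = r2) /\
      e lam = r2 /\
      derivable_pt_lim (fun x => Ffun gamma p a omega n b pi lam x) r1 d1 /\
      derivable_pt_lim (fun x => Ffun gamma p a omega n b pi lam x) r2 d2 /\
      d1 <= 0 /\ 0 < d2.
Proof.
  intros lam Hlam.
  pose proof (smooth_on_ray_cont lamstar e He_smooth) as He_cont.
  pose proof (master_root_in_I _ _ _ _ _ _ _ _ _ Hgamma Ha Homega Homega1 Hb Hpi Hpi1
                Hastar Hbstar _ _ _ Hlamstar Hmu He_cont He_pole He_den He_s He_F
                lam Hlam) as HI.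
  pose proof (master_root_rising _ _ _ _ _ _ _ _ _ Hgamma Ha Homega Homega1 Hb Hpi Hpi1
                Hastar Hbstar _ _ _ Hlamstar Hmu He_cont He_pole He_den He_s He_F
                lam Hlam) as HdF.
  destruct (two_roots _ _ _ _ _ _ _ _ _ Hgamma Ha Homega Homega1 Hb Hpi Hpi1 Hastar Hbstar
              lam (e lam) HI (He_F lam Hlam) HdF)
    as [r1 [Hr1 [Hneg [HI1 [HF1 [HdF1 Huniq]]]]]].
  exists r1, (e lam), (Fderiv gamma p a omega n b pi lam r1),
    (Fderiv gamma p a omega n b pi lam (e lam)).
  refine (conj Hr1 (conj Hneg (conj HI1 (conj HI (conj HF1 (conj (He_F lam Hlam)
            (conj Huniq (conj eq_refl (conj _ (conj _ (conj (Rlt_le _ _ HdF1) HdF))))))))))).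
  all: apply (F_deriv_I _ _ _ _ _ _ _ _ _ Hgamma Ha Hb Hpi Hpi1 Hastar Hbstar); assumption.
Qed.
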